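(* Let $f_{SN_1}(x)=\sqrt{\frac{x^2+1}{2}}-\left(\frac{\sqrt x+1}{2}\right)^2$ for $x\in(0,\infty)$, let $f_{SN_1}^*(u)=u\,f_{SN_1}\!\left(\frac{1-u}{u}\right)$ for $u\in(0,1)$, extended by continuity to $[0,1]$ (explicitly $f_{SN_1}^*(u)=\frac{\sqrt2}{2}\sqrt{u^2+(1-u)^2}-\frac14\left(1+2\sqrt{u(1-u)}\right)$), and define $\overline M_{SN_1}(C_1,C_2)=E_X\{f_{SN_1}^*(P(C_2\mid x))\}$. Then $$P_e\le \frac12\left[1-\frac{4}{2\sqrt2-1}\,\overline M_{SN_1}(C_1,C_2)\right].$$
   Context: Two-class decision problem: classes $C_1,C_2$, an observation $x$ in a space $\mathrm X$ with density $p(x)$, and a posteriori probabilities $P(C_1\mid x),P(C_2\mid x)\ge0$ with $P(C_1\mid x)+P(C_2\mid x)=1$. $E_X\{g(x)\}=\int_{\mathrm X} g(x)p(x)\,dx$. $P_e=E_X\{\min(P(C_1\mid x),P(C_2\mid x))\}$ is the Bayesian probability of error. *)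

From HB Require Import structures.
From mathcomp Require Import all_boot all_order all_algebra.
From mathcomp Require Import all_classical all_reals all_analysis.
Set Implicit Arguments. Unset Strict Implicit. Unset Printing Implicit Defensive.
Import Order.TTheory GRing.Theory Num.Theory.
Local Open Scope ring_scope.

Definition fSN1 {R : realType} (x : R) : R :=
  Num.sqrt ((x ^+ 2 + 1) / 2) - ((Num.sqrt x + 1) / 2) ^+ 2.

(* f*_{SN_1}(u) = u f_{SN_1}((1-u)/u) on (0,1), extended by continuity to
   [0,1]: the limit at both endpoints is sqrt2/2 - 1/4. *)
Definition fSN1star {R : realType} (u : R) : R :=
  if (0 < u) && (u < 1) then u * fSN1 ((1 - u) / u)
  else Num.sqrt 2 / 2 - 1 / 4.

Definition EX {d : measure_display} {T : measurableType d} {R : realType}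
  (mu : {measure set T -> \bar R}) (p : T -> R) (g : T -> R) : R :=
  Rintegral mu setT (fun x => g x * p x).

(* Bayesian probability of error; P(C1|x) = P1 x, P(C2|x) = P2 x *)
Definition Pe {d : measure_display} {T : measurableType d} {R : realType}
  (mu : {measure set T -> \bar R}) (p P1 P2 : T -> R) : R :=
  EX mu p (fun x => Order.min (P1 x) (P2 x)).

Definition MbarSN1 {d : measure_display} {T : measurableType d} {R : realType}
  (mu : {measure set T -> \bar R}) (p P2 : T -> R) : R :=
  EX mu p (fun x => fSN1star (P2 x)).

(* The bound is pointwise: with u = P(C2|x) and c = 2/(2 sqrt2 - 1),
   min(u, 1-u) + c f*(u) <= 1/2 on [0,1]; integrating against the density p
   gives Pe + c Mbar <= 1/2.  By the symmetry f*(1-u) = f*(u) it suffices to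
   take u <= 1/2, and the substitution x = sqrt u, y = sqrt(1-u) turns the
   pointwise bound into a polynomial inequality between x and y. *)

From HB Require Import structures.
From mathcomp Require Import all_boot all_order all_algebra.
From mathcomp Require Import all_classical all_reals all_analysis.
From mathcomp Require Import measurable_realfun.
From mathcomp Require Import ring lra.
Import Order.TTheory GRing.Theory Num.Theory.
Local Open Scope ring_scope.

Definition fSN1star_cf {R : realType} (u : R) : R :=
  Num.sqrt ((u ^+ 2 + (1 - u) ^+ 2) / 2) - (1 + 2 * Num.sqrt (u * (1 - u))) / 4.

Lemma sqrtr_half (R : realType) : Num.sqrt (1 / 2 : R) = Num.sqrt 2 / 2.
Proof.
have sqrt2M : Num.sqrt 2 * Num.sqrt (1 / 2 : R) = 1.
  by rewrite -sqrtrM // (_ : 2 * (1 / 2) = (1 : R)) ?sqrtr1 //; lra.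
have sqrt2_sq : Num.sqrt (2 : R) ^+ 2 = 2 by rewrite sqr_sqrtr.
nra.
Qed.

Lemma fSN1star_cfE (R : realType) (u : R) :
  0 <= u <= 1 -> fSN1star u = fSN1star_cf u.
Proof.
case/andP=> u_ge0 u_le1; rewrite /fSN1star /fSN1star_cf.
case: ifP => [/andP[u_gt0 u_lt1] | u_end].
  set v := (1 - u) / u.
  have uv : u * v = 1 - u by rewrite /v; field; rewrite gt_eqF.
  have v_ge0 : 0 <= v by rewrite divr_ge0 //; lra.
  have sqrt_u2 : Num.sqrt (u ^+ 2) = u by rewrite sqrtr_sqr ger0_norm.
  have sqrt_quad : u * Num.sqrt ((v ^+ 2 + 1) / 2) =
                   Num.sqrt ((u ^+ 2 + (1 - u) ^+ 2) / 2).
    rewrite -{1}sqrt_u2 -sqrtrM ?sqr_ge0 //; congr Num.sqrt.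
    by rewrite -uv; field.
  have sqrt_prod : Num.sqrt (u * (1 - u)) = u * Num.sqrt v.
    by rewrite -uv mulrA -expr2 sqrtrM ?sqr_ge0 // sqrt_u2.
  rewrite /fSN1 mulrBr sqrt_quad sqrt_prod; congr (_ - _).
  rewrite (_ : u * ((Num.sqrt v + 1) / 2) ^+ 2 =
               (u * Num.sqrt v ^+ 2 + 2 * (u * Num.sqrt v) + u) / 4); last by field.
  by rewrite sqr_sqrtr // uv; congr (_ / _); ring.
have [-> | u_neq0] := eqVneq u 0.
  by rewrite expr0n /= subr0 expr1n add0r mul0r sqrtr0 mulr0 addr0 sqrtr_half.
have -> : u = 1.
  have u_gt0 : 0 < u by rewrite lt_neqAle eq_sym u_neq0.
  by move: u_end; rewrite u_gt0 /= => /negbT; rewrite -leNgt; lra.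
by rewrite subrr expr0n /= expr1n addr0 mulr0 sqrtr0 mulr0 addr0 sqrtr_half.
Qed.

Lemma fSN1star_cfC (R : realType) (u : R) : fSN1star_cf (1 - u) = fSN1star_cf u.
Proof.
rewrite /fSN1star_cf (_ : 1 - (1 - u) = u); last by ring.
by rewrite (addrC ((1 - u) ^+ 2)) (mulrC (1 - u)).
Qed.

(* [r] stands for sqrt 2; the difference of the squares of both sides is
   [x (y - x) (2 r (x + y)^2 - x (3 y + x))], nonnegative because r >= 1. *)
Lemma sqrt_mean_fourth_le (R : realType) (x y r s : R) :
  0 <= x -> x <= y -> r ^+ 2 = 2 -> 0 <= r ->
  0 <= s -> s ^+ 2 = (x ^+ 4 + y ^+ 4) / 2 ->
  2 * s <= r * (y ^+ 2 - x ^+ 2) + x ^+ 2 + x * y.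
Proof.
move=> x_ge0 xy r_sq r_ge0 s_ge0 s_sq.
have r_ge1 : 1 <= r by nra.
have rhs_ge0 : 0 <= r * (y ^+ 2 - x ^+ 2) + x ^+ 2 + x * y.
  have : 0 <= r * (y ^+ 2 - x ^+ 2) by apply: mulr_ge0; nra.
  nra.
suff : (2 * s) ^+ 2 <= (r * (y ^+ 2 - x ^+ 2) + x ^+ 2 + x * y) ^+ 2 by nra.
have diff_sq : (r * (y ^+ 2 - x ^+ 2) + x ^+ 2 + x * y) ^+ 2 - (2 * s) ^+ 2 =
               x * (y - x) * (2 * r * (x + y) ^+ 2 - x * (3 * y + x)).
  have : (r * (y ^+ 2 - x ^+ 2) + x ^+ 2 + x * y) ^+ 2 - 2 * (x ^+ 4 + y ^+ 4)
         - x * (y - x) * (2 * r * (x + y) ^+ 2 - x * (3 * y + x))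
         = (r ^+ 2 - 2) * (y ^+ 2 - x ^+ 2) ^+ 2 by ring.
  rewrite r_sq subrr mul0r exprMn s_sq; lra.
have : 0 <= x * (y - x) * (2 * r * (x + y) ^+ 2 - x * (3 * y + x)).
  apply: mulr_ge0; first nra.
  have : (x + y) ^+ 2 <= r * (x + y) ^+ 2 by rewrite ler_peMl ?sqr_ge0.
  nra.
lra.
Qed.

Lemma add_fSN1star_cf_le_half (R : realType) (u : R) : 0 <= u -> u <= 1 / 2 ->
  u + 2 / (2 * Num.sqrt 2 - 1) * fSN1star_cf u <= 1 / 2.
Proof.
move=> u_ge0 u_le_half.
set r := Num.sqrt (2 : R).
have r_sq : r ^+ 2 = 2 by rewrite sqr_sqrtr.
have r_ge0 : 0 <= r := sqrtr_ge0 _.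
have den_gt0 : 0 < 2 * r - 1 by nra.
set x := Num.sqrt u; set y := Num.sqrt (1 - u).
have x_sq : x ^+ 2 = u by rewrite sqr_sqrtr.
have y_sq : y ^+ 2 = 1 - u by rewrite sqr_sqrtr // subr_ge0; lra.
have xy : x <= y by rewrite ler_sqrt; lra.
set s := Num.sqrt ((u ^+ 2 + (1 - u) ^+ 2) / 2).
have s_sq : s ^+ 2 = (x ^+ 4 + y ^+ 4) / 2.
  rewrite sqr_sqrtr; last by rewrite divr_ge0 // addr_ge0 ?sqr_ge0.
  by rewrite -y_sq -x_sq -!exprM.
have := @sqrt_mean_fourth_le R x y r s (sqrtr_ge0 u) xy r_sq r_ge0 (sqrtr_ge0 _) s_sq.
rewrite x_sq y_sq /fSN1star_cf -/s sqrtrM // -/x -/y => key.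
suff : 2 / (2 * r - 1) * (s - (1 + 2 * (x * y)) / 4) <= 1 / 2 - u by lra.
rewrite mulrAC ler_pdivrMr //; nra.
Qed.

Lemma min_add_fSN1star_cf_le_half (R : realType) (u : R) : 0 <= u <= 1 ->
  Order.min (1 - u) u + 2 / (2 * Num.sqrt 2 - 1) * fSN1star_cf u <= 1 / 2.
Proof.
case/andP=> u_ge0 u_le1; have [u_le_half | u_gt_half] := leP u (1 / 2).
  by rewrite min_r; [exact: add_fSN1star_cf_le_half | lra].
rewrite min_l; last lra.
by rewrite -fSN1star_cfC; apply: add_fSN1star_cf_le_half; lra.
Qed.

Lemma normr_fSN1star_cf_le1 (R : realType) (u : R) :
  0 <= u <= 1 -> `|fSN1star_cf u| <= 1.
Proof.
case/andP=> u_ge0 u_le1; rewrite /fSN1star_cf.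
set s := Num.sqrt _; set t := Num.sqrt _.
have s_ge0 : 0 <= s := sqrtr_ge0 _.
have t_ge0 : 0 <= t := sqrtr_ge0 _.
have s_sq : s ^+ 2 = (u ^+ 2 + (1 - u) ^+ 2) / 2.
  by rewrite sqr_sqrtr // divr_ge0 // addr_ge0 ?sqr_ge0.
have t_sq : t ^+ 2 = u * (1 - u) by rewrite sqr_sqrtr // mulr_ge0 //; lra.
have s_le1 : s <= 1 by nra.
have t_le1 : t <= 1 by nra.
rewrite ler_norml; apply/andP; split; lra.
Qed.

Lemma measurable_fSN1star_cf (R : realType) :
  measurable_fun setT (@fSN1star_cf R).
Proof.
have msqrt := continuous_measurable_fun (@sqrt_continuous R).
have m1B : measurable_fun setT (fun u : R => 1 - u).
  by apply: measurable_funB => //; exact: measurable_cst.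
rewrite /fSN1star_cf; apply: measurable_funB.
  apply: measurableT_comp msqrt _; apply: measurable_funM; last exact: measurable_cst.
  by apply: measurable_funD; apply: measurable_funX.
apply: measurable_funM; last exact: measurable_cst.
apply: measurable_funD; first exact: measurable_cst.
apply: measurable_funM; first exact: measurable_cst.
by apply: measurableT_comp msqrt _; apply: measurable_funM.
Qed.

Section expectation_bounded.
Context {d} {T : measurableType d} {R : realType} {mu : {measure set T -> \bar R}}.
Context {p : T -> R}.
Hypotheses (p_meas : measurable_fun setT p) (p_ge0 : forall x, 0 <= p x).
Hypothesis p_norm : (\int[mu]_x (p x)%:E = 1)%E.

Lemma integrable_density : mu.-integrable setT (EFin \o p).
Proof.
apply/integrableP; split; first exact/measurable_EFinP.
under eq_integral => x _ do rewrite abse_EFin ger0_norm //.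
by rewrite p_norm ltry.
Qed.

Lemma integrable_bounded_mul_density {f : T -> R} {K : R} :
  measurable_fun setT f -> (forall x, `|f x| <= K) ->
  mu.-integrable setT (EFin \o (fun x => f x * p x)).
Proof.
move=> f_meas f_le; have K_ge0 : 0 <= K := le_trans (normr_ge0 _) (f_le point).
apply: (le_integrable _ _ _ (integrableZl _ K integrable_density)) => //.
  by apply/measurable_EFinP; exact: measurable_funM.
move=> x _ /=; rewrite lee_fin !normrM (ger0_norm (p_ge0 x)) (ger0_norm K_ge0).
exact: ler_wpM2r.
Qed.

Lemma EX_cst (K : R) : EX mu p (fun=> K) = K.
Proof. by rewrite /EX RintegralZl ?integrable_density // /Rintegral p_norm mulr1. Qed.

Lemma EXDZ {f g : T -> R} {c Kf Kg : R} :
  measurable_fun setT f -> (forall x, `|f x| <= Kf) ->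
  measurable_fun setT g -> (forall x, `|g x| <= Kg) ->
  EX mu p (fun x => f x + c * g x) = EX mu p f + c * EX mu p g.
Proof.
move=> f_meas f_le g_meas g_le.
have g_int := integrable_bounded_mul_density g_meas g_le.
rewrite /EX -RintegralZl // -RintegralD //.
- by apply: eq_Rintegral => x _; rewrite mulrDl mulrA.
- exact: integrable_bounded_mul_density f_meas f_le.
- exact: (integrableZl _ c g_int).
Qed.

Lemma EX_le_cst {f : T -> R} {Kf K : R} :
  measurable_fun setT f -> (forall x, `|f x| <= Kf) -> (forall x, f x <= K) ->
  EX mu p f <= K.
Proof.
move=> f_meas f_le f_leK; rewrite -(EX_cst K) /EX.
apply: le_Rintegral => //.
- exact: integrable_bounded_mul_density f_meas f_le.
- exact: (integrableZl _ K integrable_density).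
- by move=> x _; rewrite ler_wpM2r.
Qed.

Lemma EXDZ_le_cst {f g : T -> R} {c Kf Kg K : R} :
  measurable_fun setT f -> (forall x, `|f x| <= Kf) ->
  measurable_fun setT g -> (forall x, `|g x| <= Kg) ->
  (forall x, f x + c * g x <= K) -> EX mu p f + c * EX mu p g <= K.
Proof.
move=> f_meas f_le g_meas g_le fg_leK; rewrite -(EXDZ f_meas f_le g_meas g_le).
apply: (EX_le_cst (Kf := Kf + `|c| * Kg)) fg_leK.
  by apply: measurable_funD => //; apply: measurable_funM => //; exact: measurable_cst.
move=> x; apply: le_trans (ler_normD _ _) _; rewrite normrM lerD //.
exact: ler_wpM2l.
Qed.

End expectation_bounded.

Theorem mainTheorem4 (d : measure_display) (T : measurableType d) (R : realType)
  (mu : {measure set T -> \bar R}) (p P1 P2 : T -> R)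
  (p_meas : measurable_fun setT p) (p_ge0 : forall x, 0 <= p x)
  (p_norm : (\int[mu]_x (p x)%:E = 1)%E)
  (P1_meas : measurable_fun setT P1) (P2_meas : measurable_fun setT P2)
  (P1_ge0 : forall x, 0 <= P1 x) (P2_ge0 : forall x, 0 <= P2 x)
  (P12 : forall x, P1 x + P2 x = 1) :
  Pe mu p P1 P2 <=
    (1 / 2) * (1 - 4 / (2 * Num.sqrt 2 - 1) * MbarSN1 mu p P2).
Proof.
pose c : R := 2 / (2 * Num.sqrt 2 - 1).
have P1E x : P1 x = 1 - P2 x by have := P12 x; lra.
have P2_01 x : 0 <= P2 x <= 1 by rewrite P2_ge0 /=; have := P1_ge0 x; rewrite P1E; lra.
have fSN1star_P2E : (fun x => fSN1star (P2 x)) = fSN1star_cf \o P2.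
  by apply/funext => x; rewrite /= fSN1star_cfE.
have star_meas : measurable_fun setT (fun x => fSN1star (P2 x)).
  by rewrite fSN1star_P2E; exact: measurableT_comp (measurable_fSN1star_cf R) _.
have star_le1 x : `|fSN1star (P2 x)| <= 1.
  by rewrite fSN1star_cfE ?normr_fSN1star_cf_le1.
have min_meas : measurable_fun setT (fun x => Order.min (P1 x) (P2 x)).
  exact: measurable_minr.
have min_le1 x : `|Order.min (P1 x) (P2 x)| <= 1.
  have := P2_01 x; rewrite ger0_norm ?le_min ?P1_ge0 ?P2_ge0 // ge_min P1E; lra.
have pointwise x : Order.min (P1 x) (P2 x) + c * fSN1star (P2 x) <= 1 / 2.
  by rewrite P1E fSN1star_cfE //; exact: min_add_fSN1star_cf_le_half.
have := EXDZ_le_cst p_meas p_ge0 p_norm min_meas min_le1 star_meas star_le1 pointwise.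
have den_gt0 : 0 < 2 * Num.sqrt 2 - 1 :> R.
  have : Num.sqrt 2 ^+ 2 = 2 :> R by rewrite sqr_sqrtr.
  have := sqrtr_ge0 (2 : R); nra.
rewrite -/(Pe mu p P1 P2) -/(MbarSN1 mu p P2).
rewrite (_ : 4 / _ = 2 * c); first lra.
by rewrite /c; field; rewrite gt_eqF.
Qed.
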